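(* For every $x\in\mathrm{mon}(\mathcal{B})$, \[ \limsup_{N\to\infty}\frac1{\log N}\sum_{n=1}^N(x^*_n)^2\le1, \] where $x^*$ is the decreasing rearrangement of $(|x_n|)_{n\in\mathbb{N}}$.
   Context: For $N\in\mathbb{N}$, $\mathcal{B}_N$ is the space of functions $f\colon\{-1,1\}^N\to\mathbb{R}$ with sup norm and Fourier–Walsh coefficients $\widehat f(S)=2^{-N}\sum_xf(x)x^S$, $x^S=\prod_{n\in S}x_n$; $\mathcal{B}=\bigcup_N\mathcal{B}_N$. $\mathrm{mon}(\mathcal{B})$ is the set of $x\in\mathbb{R}^{\mathbb{N}}$ for which there is $C>0$ such that $\sum_{S\subset\{1,\dots,N\}}|\widehat f(S)x^S|\le C\|f\|_\infty$ for all $N$ and all $f\in\mathcal{B}_N$. (Elements of $\mathrm{mon}(\mathcal{B})$ tend to $0$, so the decreasing rearrangement is well defined.) $\log$ is natural. *)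

From HB Require Import structures.
From mathcomp Require Import all_boot all_order all_algebra.
From mathcomp Require Import all_classical all_reals all_analysis.
Set Implicit Arguments. Unset Strict Implicit. Unset Printing Implicit Defensive.
Import Order.TTheory GRing.Theory Num.Theory.
Local Open Scope classical_set_scope.
Local Open Scope ring_scope.

(* The cube {-1,1}^N, a point being encoded by 'I_N -> bool
   (true <-> +1, false <-> -1). *)
Definition cube (N : nat) : finType := {ffun 'I_N -> bool}.

Definition sgn {R : realType} (b : bool) : R := if b then 1 else -1.

Definition cube_mono {R : realType} (N : nat) (S : {set 'I_N}) (x : cube N) : R :=
  \prod_(n in S) sgn (x n).

Definition supnorm {R : realType} (N : nat) (f : cube N -> R) : R :=
  \big[Num.max/0]_(x : cube N) `|f x|.

Definition fw_coef {R : realType} (N : nat) (f : cube N -> R) (S : {set 'I_N}) : R :=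
  (2 ^+ N)^-1 * \sum_(x : cube N) f x * cube_mono S x.

(* monomial of a real sequence: x^S = prod_{n in S} x_n
   (the coordinates of {-1,1}^N are identified with the first N indices
    of the sequence, index 0 of the sequence playing the role of x_1) *)
Definition seq_mono {R : realType} (N : nat) (x : nat -> R) (S : {set 'I_N}) : R :=
  \prod_(n in S) x (nat_of_ord n).

Definition monB {R : realType} (x : nat -> R) : Prop :=
  exists C : R, 0 < C /\
    forall (N : nat) (f : cube N -> R),
      \sum_(S : {set 'I_N}) `|fw_coef f S * seq_mono x S| <= C * supnorm f.

(* decreasing rearrangement x^*_n (n >= 1) of (|x_k|)_k :
   x^*_n = inf { sup_{k notin J} |x_k| : J finite, #J < n }. *)
Definition decr_rearr {R : realType} (x : nat -> R) (n : nat) : R :=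
  inf [set s : R | exists J : seq nat,
        [/\ uniq J, (size J < n)%N &
            s = sup [set `|x k| | k in [set k : nat | k \notin J]]]].

(* The proof has three independent parts.
   1. mon(B) is contained in l^2.  Testing the defining inequality of mon(B)
      on f = sign(X_N), where X_N(y) = sum_{i<N} x_i y_i is a Rademacher sum,
      only the singleton Fourier-Walsh coefficients contribute and give
      E|X_N| <= C.  Khintchine's inequality E|X_N| >= (5/9) (E X_N^2)^{1/2},
      proved here from the moment bounds E X^2 = s and E X^4 <= 3 s^2 and a
      pointwise quartic minorant of |t|, then bounds sum_k x_k^2 by (9C/5)^2.
   2. For a square-summable sequence, (x^*_n)^2 <= 1/n for n large: choose M
      with tail sum beyond M below 1/2; by Chebyshev counting fewer than n
      indices have x_k^2 > 1/n once n >= 2M, and x^* is bounded by the sup of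
      |x_k| off those indices.
   3. Hence sum_{n<=N} (x^*_n)^2 <= const + H_N <= const + 1 + ln N, and the
      limsup of the ratio with ln N is at most 1. *)
From HB Require Import structures.
From mathcomp Require Import all_boot all_order all_algebra.
From mathcomp Require Import all_classical all_reals all_analysis.
From mathcomp Require Import zify ring lra.
Import Order.TTheory GRing.Theory Num.Theory.
Local Open Scope ring_scope.

Set Implicit Arguments. Unset Strict Implicit. Unset Printing Implicit Defensive.

Section Rademacher.
Variables (R : realType) (N : nat).

Definition flip (i : 'I_N) (y : cube N) : cube N :=
  [ffun j => if j == i then ~~ y j else y j].

Lemma flipK i : involutive (flip i).
Proof.
move=> y; apply/ffunP => j; rewrite !ffunE.
by case: eqP => // ->; rewrite negbK.
Qed.

Lemma sgn_flip i y : sgn (flip i y i) = - (sgn (y i) : R).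
Proof. by rewrite ffunE eqxx /sgn; case: (y i); rewrite ?opprK. Qed.

Lemma sgn_sqr (b : bool) : (sgn b : R) ^+ 2 = 1.
Proof. by rewrite /sgn; case: b; rewrite ?sqrrN expr1n. Qed.

Lemma sum_mul_sgn_eq0 i (F : cube N -> R) : (forall y, F (flip i y) = F y) ->
  \sum_y F y * sgn (y i) = 0.
Proof.
move=> Fflip; set S := \sum_y _.
suff : S = - S by lra.
rewrite {1}/S (reindex_inj (inv_inj (flipK i))) /= -sumrN.
by apply: eq_bigr => y _; rewrite Fflip sgn_flip mulrN.
Qed.

Lemma binomial2_unit (t a e : R) : e ^+ 2 = 1 ->
  (t + a * e) ^+ 2 = t ^+ 2 + 2 * a * (t * e) + a ^+ 2.
Proof.
move=> e2; have -> : (t + a * e) ^+ 2 =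
    t ^+ 2 + 2 * a * (t * e) + a ^+ 2 + (e ^+ 2 - 1) * a ^+ 2 by ring.
by rewrite e2 subrr mul0r addr0.
Qed.

Lemma binomial4_unit (t a e : R) : e ^+ 2 = 1 ->
  (t + a * e) ^+ 4 = t ^+ 4 + 4 * a * (t ^+ 3 * e) + 6 * a ^+ 2 * t ^+ 2
    + 4 * a ^+ 3 * (t * e) + a ^+ 4.
Proof.
move=> e2; have -> : (t + a * e) ^+ 4 = t ^+ 4 + 4 * a * (t ^+ 3 * e)
    + 6 * a ^+ 2 * t ^+ 2 + 4 * a ^+ 3 * (t * e) + a ^+ 4
    + (e ^+ 2 - 1) * (6 * a ^+ 2 * t ^+ 2 + 4 * a ^+ 3 * t * e + a ^+ 4 * (e ^+ 2 + 1)).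
  by ring.
by rewrite e2 subrr mul0r addr0.
Qed.

Lemma sum_cube_const (c : R) : \sum_(y : cube N) c = c * 2 ^+ N.
Proof. by rewrite sumr_const card_ffun card_bool card_ord -natrX mulr_natr. Qed.

Variable x : nat -> R.

Definition rsum (k : nat) (y : cube N) : R :=
  \sum_(i : 'I_N | (i < k)%N) x i * sgn (y i).
Definition rvar (k : nat) : R := \sum_(i : 'I_N | (i < k)%N) x i ^+ 2.

Lemma sum_lt_succ k (hk : (k < N)%N) (F : 'I_N -> R) :
  \sum_(i : 'I_N | (i < k.+1)%N) F i =
  \sum_(i : 'I_N | (i < k)%N) F i + F (Ordinal hk).
Proof.
rewrite (bigD1 (Ordinal hk)) //= addrC; congr (_ + _).
by apply: eq_bigl => j; rewrite ltnS -val_eqE /= ltn_neqAle andbC.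
Qed.

Lemma rsum0 y : rsum 0 y = 0.
Proof. by rewrite /rsum big_pred0. Qed.

Lemma rvar0 : rvar 0 = 0.
Proof. by rewrite /rvar big_pred0. Qed.

Lemma rvar_ge0 k : 0 <= rvar k.
Proof. by apply: sumr_ge0 => i _; apply: sqr_ge0. Qed.

Lemma rvarN : rvar N = \sum_(k < N) x k ^+ 2.
Proof. by apply: eq_bigl => i; rewrite ltn_ord. Qed.

Lemma rsum_flip k (i : 'I_N) y : (k <= i)%N -> rsum k (flip i y) = rsum k y.
Proof.
move=> ki; apply: eq_bigr => j jk; rewrite ffunE.
by case: eqP => // ji; move: jk; rewrite ji ltnNge ki.
Qed.

Lemma rsum_odd_moment k (hk : (k < N)%N) (G : R -> R) :
  \sum_y G (rsum k y) * sgn (y (Ordinal hk)) = 0.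
Proof. by apply: sum_mul_sgn_eq0 => y; rewrite rsum_flip. Qed.

(* E[X_k^2] = s_k: induction on k, the cross term being an odd moment. *)
Lemma second_moment k : (k <= N)%N -> \sum_y rsum k y ^+ 2 = 2 ^+ N * rvar k.
Proof.
elim: k => [|k IH] hk.
  by rewrite rvar0 mulr0 big1 // => y _; rewrite rsum0 expr0n.
have expand y : rsum k.+1 y ^+ 2 = rsum k y ^+ 2
    + 2 * x k * (rsum k y * sgn (y (Ordinal hk))) + x k ^+ 2.
  by rewrite /rsum sum_lt_succ -/(rsum k y) /= binomial2_unit ?sgn_sqr.
under eq_bigr do rewrite expand.
rewrite !big_split /= -mulr_sumr (rsum_odd_moment hk id) IH 1?ltnW //.
by rewrite sum_cube_const /rvar sum_lt_succ; ring.
Qed.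

Lemma fourth_moment k : (k <= N)%N -> \sum_y rsum k y ^+ 4 <= 3 * 2 ^+ N * rvar k ^+ 2.
Proof.
elim: k => [|k IH] hk.
  by rewrite rvar0 big1 ?expr0n ?mulr0 // => y _; rewrite rsum0 expr0n.
set a := x k; set e := fun y : cube N => sgn (y (Ordinal hk)) : R.
have expand y : rsum k.+1 y ^+ 4 = rsum k y ^+ 4 + 4 * a * (rsum k y ^+ 3 * e y)
    + 6 * a ^+ 2 * rsum k y ^+ 2 + 4 * a ^+ 3 * (rsum k y * e y) + a ^+ 4.
  by rewrite /rsum sum_lt_succ -/(rsum k y) /= binomial4_unit ?sgn_sqr.
under eq_bigr do rewrite expand.
rewrite !big_split /= -!mulr_sumr (rsum_odd_moment hk (fun t => t ^+ 3)).
rewrite (rsum_odd_moment hk id) second_moment 1?ltnW //.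
rewrite sum_cube_const /rvar sum_lt_succ -/(rvar k) /= -/a !mulr0 !addr0.
set c : R := 2 ^+ N; set S := \sum_i _.
have split_rhs : 3 * c * (rvar k + a ^+ 2) ^+ 2 =
    3 * c * rvar k ^+ 2 + 6 * a ^+ 2 * (c * rvar k) + a ^+ 4 * c
    + 2 * c * (a ^+ 2) ^+ 2 by ring.
have : 0 <= 2 * c * (a ^+ 2) ^+ 2 by rewrite mulr_ge0 ?sqr_ge0 ?mulr_ge0 ?exprn_ge0.
have := IH (ltnW hk); rewrite -/S -/c split_rhs; lra.
Qed.

End Rademacher.

(* Elementary inequality behind Khintchine's inequality for p = 1: for l > 0,
   |t| >= t^2/l - 4 t^4/(27 l^3), the difference being
   |t| (2|t| - 3l)^2 (|t| + 3l) / (27 l^3). *)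
Lemma abs_ge_quartic (R : realType) (l t : R) : 0 < l ->
  t ^+ 2 / l - 4 * t ^+ 4 / (27 * l ^+ 3) <= `|t|.
Proof.
move=> l0; set u := `|t|.
have t2 : t ^+ 2 = u ^+ 2 by rewrite real_normK ?num_real.
have t4 : t ^+ 4 = (u ^+ 2) ^+ 2 by rewrite -t2 -exprM.
rewrite t2 t4 -subr_ge0.
have -> : u - (u ^+ 2 / l - 4 * (u ^+ 2) ^+ 2 / (27 * l ^+ 3)) =
    u * (2 * u - 3 * l) ^+ 2 * (u + 3 * l) / (27 * l ^+ 3).
  by field; rewrite gt_eqF // exprn_gt0.
have u0 : 0 <= u := normr_ge0 t.
have l3 : 0 <= 27 * l ^+ 3 by rewrite mulr_ge0 // exprn_ge0 // ltW.
by rewrite divr_ge0 // mulr_ge0 ?(mulr_ge0 u0 (sqr_ge0 _)) //; lra.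
Qed.

Section Khintchine.
Variables (R : realType) (N : nat) (x : nat -> R).

(* Khintchine's inequality for p = 1 with constant 5/9, obtained from the
   second and fourth moments:  E|X_k| >= (5/9) sqrt(E X_k^2). *)
Lemma khintchine_l1 k : (k <= N)%N ->
  5 / 9 * Num.sqrt (rvar N x k) * 2 ^+ N <= \sum_(y : cube N) `|rsum x k y|.
Proof.
move=> kN; have [s0|s_neq0] := eqVneq (rvar N x k) 0.
  by rewrite s0 sqrtr0 mulr0 mul0r sumr_ge0.
set l := Num.sqrt (rvar N x k).
have l0 : 0 < l.
  by rewrite sqrtr_gt0 lt_neqAle eq_sym s_neq0 rvar_ge0.
have sl : rvar N x k = l ^+ 2 by rewrite sqr_sqrtr ?rvar_ge0.
have c0 : (0 : R) < 2 ^+ N by apply: exprn_gt0.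
apply: le_trans (ler_sum _ (fun y _ => abs_ge_quartic (rsum x k y) l0)).
rewrite sumrB -!mulr_suml -mulr_sumr second_moment // sl.
have M4 := fourth_moment x kN; rewrite sl in M4.
have l3 : 0 < 27 * l ^+ 3 by rewrite mulr_gt0 ?exprn_gt0.
have fourth : 4 * (\sum_(y : cube N) rsum x k y ^+ 4) / (27 * l ^+ 3) <= 4 / 9 * l * 2 ^+ N.
  rewrite ler_pdivrMr //.
  have -> : 4 / 9 * l * 2 ^+ N * (27 * l ^+ 3) = 4 * (3 * 2 ^+ N * (l ^+ 2) ^+ 2).
    by field.
  lra.
have -> : 2 ^+ N * l ^+ 2 / l = l * 2 ^+ N by field; rewrite gt_eqF.
lra.
Qed.

Lemma fourier_rsum (f : cube N -> R) :
  (2 ^+ N)^-1 * \sum_y f y * rsum x N y =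
  \sum_i fw_coef f [set i] * seq_mono x [set i].
Proof.
rewrite /fw_coef /seq_mono /cube_mono /rsum.
transitivity (\sum_y \sum_(i : 'I_N) (2 ^+ N)^-1 * (f y * (x i * sgn (y i)))).
  rewrite mulr_sumr; apply: eq_bigr => y _.
  rewrite (eq_bigl xpredT); last by move=> i; rewrite ltn_ord.
  by rewrite !mulr_sumr.
rewrite exchange_big /=; apply: eq_bigr => i _.
rewrite mulr_sumr mulr_suml; apply: eq_bigr => y _.
by rewrite !big_set1; ring.
Qed.

Lemma sum_singletons_le (F : {set 'I_N} -> R) : (forall S, 0 <= F S) ->
  \sum_i F [set i] <= \sum_S F S.
Proof.
move=> F0; rewrite [X in _ <= X](bigID (mem [set [set i] | i : 'I_N])) /=.
rewrite (big_imset _ (in2W (@set1_inj _))) /= lerDl.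
by apply: sumr_ge0.
Qed.

(* Testing the mon(B) inequality on f = sign(X_N), a function of sup norm at
   most 1, bounds the first absolute moment of the Rademacher sum. *)
Lemma monB_rsum_l1 (C : R) :
  (forall f : cube N -> R,
     \sum_S `|fw_coef f S * seq_mono x S| <= C * supnorm f) ->
  0 < C -> (2 ^+ N)^-1 * \sum_(y : cube N) `|rsum x N y| <= C.
Proof.
move=> HC C0.
pose f (y : cube N) : R := if 0 <= rsum x N y then 1 else -1.
have f_rsum (y : cube N) : f y * rsum x N y = `|rsum x N y|.
  rewrite /f; case: ifP => h; first by rewrite mul1r ger0_norm.
  by rewrite mulN1r ltr0_norm // ltNge h.
have f_sup : supnorm f <= 1.
  rewrite /supnorm; apply: bigmax_le => // y _.
  by rewrite /f; case: ifP; rewrite ?normrN normr1.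
under eq_bigr do rewrite -f_rsum.
rewrite fourier_rsum.
apply: le_trans (ler_sum _ (fun i _ => ler_norm _)) _.
apply: le_trans (sum_singletons_le (fun S => normr_ge0 (fw_coef f S * seq_mono x S))) _.
apply: le_trans (HC f) _.
exact: ler_piMr (ltW C0) f_sup.
Qed.

End Khintchine.

Lemma monB_square_summable (R : realType) (x : nat -> R) : monB x ->
  exists K, 0 <= K /\ forall N, \sum_(k < N) x k ^+ 2 <= K.
Proof.
case=> C [C0 HC]; exists ((9 * C / 5) ^+ 2); split; first exact: sqr_ge0.
move=> N; rewrite -rvarN.
have c0 : (0 : R) < 2 ^+ N by apply: exprn_gt0.
have lower := khintchine_l1 x (leqnn N).
have upper := monB_rsum_l1 (HC N) C0.
rewrite ler_pdivrMl // mulrC in upper.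
have root_le : Num.sqrt (rvar N x N) <= 9 * C / 5.
  by move: (le_trans lower upper); rewrite ler_pM2r //; lra.
have l0 := sqrtr_ge0 (rvar N x N).
by rewrite -(sqr_sqrtr (rvar_ge0 N x N)) lerXn2r ?nnegrE //; lra.
Qed.

Lemma exists_notin (J : seq nat) : exists k, k \notin J.
Proof.
have : ~~ all (mem J) (iota 0 (size J).+1).
  apply/negP => /allP sub.
  by have := uniq_leq_size (iota_uniq 0 (size J).+1) sub; rewrite size_iota ltnn.
by case/allPn => k _ kJ; exists k.
Qed.

Section DecreasingRearrangement.
Variables (R : realType) (x : nat -> R) (B : R).
Hypothesis x_le : forall k, `|x k| <= B.

Local Open Scope classical_set_scope.

Definition outside_values (J : seq nat) : set R :=
  [set `|x k| | k in [set k : nat | k \notin J]].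

Lemma outside_values_has_sup J : has_sup (outside_values J).
Proof.
split; first by have [k kJ] := exists_notin J; exists `|x k|, k.
by exists B => _ [k _ <-].
Qed.

Lemma outside_sup_ge0 J : 0 <= sup (outside_values J).
Proof.
have [k kJ] := exists_notin J.
apply: le_trans (normr_ge0 (x k)) _.
by apply: ub_le_sup; [case: (outside_values_has_sup J) | exists k].
Qed.

Lemma decr_rearr_ge0 n : (0 < n)%N -> 0 <= decr_rearr x n.
Proof.
move=> n0; apply: lb_le_inf; first by exists (sup (outside_values [::])), [::].
by move=> _ [J [_ _ ->]]; apply: outside_sup_ge0.
Qed.

Lemma decr_rearr_le n J t : uniq J -> (size J < n)%N ->
  (forall k, k \notin J -> `|x k| <= t) -> decr_rearr x n <= t.
Proof.
move=> uJ sJ small; apply: (@le_trans _ _ (sup (outside_values J))).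
  apply: ge_inf; last by exists J.
  by exists 0 => _ [J' [_ _ ->]]; apply: outside_sup_ge0.
apply: ge_sup; first by case: (outside_values_has_sup J).
by move=> _ [k kJ <-]; apply: small.
Qed.

Lemma decr_rearr_sqr_le n J t : (0 < n)%N -> 0 <= t -> uniq J -> (size J < n)%N ->
  (forall k, k \notin J -> x k ^+ 2 <= t) -> decr_rearr x n ^+ 2 <= t.
Proof.
move=> n0 t0 uJ sJ small.
rewrite -(sqr_sqrtr t0) lerXn2r ?nnegrE ?decr_rearr_ge0 ?sqrtr_ge0 //.
apply: decr_rearr_le uJ sJ _ => k kJ.
by rewrite -sqrtr_sqr ler_sqrt ?small.
Qed.

End DecreasingRearrangement.

Lemma count_iota_mono (p : pred nat) m k : (m <= k)%N ->
  (count p (iota 0 m) <= count p (iota 0 k))%N.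
Proof. by move=> mk; rewrite -(subnKC mk) iotaD count_cat leq_addr. Qed.

Lemma eventually_not_of_count_bounded (p : pred nat) n :
  (forall m, (count p (iota 0 m) < n)%N) -> exists m, forall k, (m <= k)%N -> ~~ p k.
Proof.
move=> bounded; apply: contrapT => often.
have later m : exists k, (m <= k)%N /\ p k.
  apply: contrapT => none; apply: often; exists m => k mk.
  by apply/negP => pk; apply: none; exists k.
have unbounded c : exists m, (c <= count p (iota 0 m))%N.
  elim: c => [|c [m cm]]; first by exists 0%N.
  have [k [mk pk]] := later m; exists k.+1.
  rewrite -[k.+1]addn1 iotaD count_cat /= pk addn0 addn1 ltnS.
  exact: leq_trans cm (count_iota_mono p mk).
have [m nm] := unbounded n.
by have := bounded m; rewrite ltnNge nm.
Qed.

Section SquareSummable.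
Variables (R : realType) (x : nat -> R) (K : R).
Hypothesis sum_sqr_le : forall N, \sum_(k < N) x k ^+ 2 <= K.

Lemma sqr_le_bound k : x k ^+ 2 <= K.
Proof.
apply: le_trans (sum_sqr_le k.+1).
by rewrite big_ord_recr /= lerDr sumr_ge0 // => i _; apply: sqr_ge0.
Qed.

Lemma abs_le_sqrt_bound k : `|x k| <= Num.sqrt K.
Proof. by rewrite -sqrtr_sqr ler_sqrt // (le_trans _ (sqr_le_bound k)) ?sqr_ge0. Qed.

Local Open Scope classical_set_scope.

Lemma small_tail : exists M, forall Q, \sum_(M <= k < M + Q) x k ^+ 2 < 1 / 2.
Proof.
pose P n := \sum_(0 <= k < n) x k ^+ 2.
have P_sup : has_sup (range P).
  by split; [exists (P 0%N), 0%N | exists K => _ [n _ <-]; rewrite /P big_mkord].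
have half_pos : (0 : R) < 1 / 2 by lra.
have [_ [M _ <-] PM] := sup_adherent half_pos P_sup.
exists M => Q.
have split_P : P (M + Q)%N = P M + \sum_(M <= k < M + Q) x k ^+ 2.
  by rewrite /P (@big_cat_nat _ _ _ M 0 (M + Q)%N) ?leq_addr.
have : P (M + Q)%N <= sup (range P).
  by apply: ub_le_sup; [case: P_sup | exists (M + Q)%N].
lra.
Qed.

Lemma count_large_le (a : R) (r : seq nat) : 0 <= a ->
  (count (fun k => a < x k ^+ 2) r)%:R * a <= \sum_(k <- r) x k ^+ 2.
Proof.
move=> a0; elim: r => [|k r IH]; first by rewrite big_nil mul0r.
rewrite big_cons /= natrD mulrDl lerD //.
by case: ltP => [/ltW|_]; rewrite ?mul1r ?mul0r ?sqr_ge0.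
Qed.

(* If the tail beyond M is below 1/2 and n >= 2M, then fewer than n indices
   have x_k^2 > 1/n: at most M of them lie below M, and fewer than n/2 above. *)
Lemma few_large_terms M n : (forall Q, \sum_(M <= k < M + Q) x k ^+ 2 < 1 / 2) ->
  (0 < n)%N -> (2 * M <= n)%N ->
  forall m, (count (fun k => (n%:R^-1 < x k ^+ 2)%R) (iota 0 m) < n)%N.
Proof.
move=> tail n0 Mn m; set p := fun k => _ < _.
apply: leq_ltn_trans (count_iota_mono p (leq_addl M m)) _.
rewrite iotaD count_cat add0n.
have low : (count p (iota 0 M) <= M)%N by rewrite -{2}(size_iota 0 M) count_size.
set c := count p (iota M m).
suff : (2 * c < n)%N by lia.
have high : c%:R * n%:R^-1 * 2 < (1 : R).
  have := tail m; rewrite /index_iota addKn.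
  have inv_ge0 : (0 : R) <= n%:R^-1 by rewrite invr_ge0.
  have := count_large_le (iota M m) inv_ge0.
  by rewrite -/p -/c => le1 lt; lra.
rewrite -(ltr_nat R) natrM mulrC -(ltr_pM2r (_ : 0 < n%:R^-1)) ?invr_gt0 ?ltr0n //.
by rewrite divff ?pnatr_eq0 -?lt0n // mulrAC.
Qed.

Lemma decr_rearr_sqr_le_inv : exists N0, forall n, (0 < n)%N -> (N0 <= n)%N ->
  decr_rearr x n ^+ 2 <= n%:R^-1.
Proof.
have [M tail] := small_tail; exists (2 * M)%N => n n0 Mn.
set p := fun k => n%:R^-1 < x k ^+ 2.
have [m large_before] := eventually_not_of_count_bounded (few_large_terms tail n0 Mn).
apply: (decr_rearr_sqr_le abs_le_sqrt_bound n0 _ (filter_uniq p (iota_uniq 0 m))).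
- by rewrite invr_ge0.
- by rewrite size_filter (few_large_terms tail).
move=> k; rewrite mem_filter mem_iota add0n /= negb_and leqNgt negbK.
by case/orP => [|/large_before]; rewrite -?leNgt //; apply: contraNT => /ltW.
Qed.

End SquareSummable.

Section Asymptotics.
Variable R : realType.

(* H_N <= 1 + ln N, from 1/(n+1) <= ln(n+1) - ln n. *)
Lemma harmonic_le_ln N : (0 < N)%N ->
  \sum_(1 <= n < N.+1) (n%:R : R)^-1 <= 1 + ln (N%:R : R).
Proof.
elim: N => [//|[|N] IH] _; first by rewrite big_nat1 ln1 invr1 addr0.
rewrite big_nat_recr //=.
have N1 : (0 : R) < N.+1%:R by rewrite ltr0n.
have N2 : (0 : R) < N.+2%:R by rewrite ltr0n.
have step : N.+2%:R^-1 <= ln (N.+2%:R : R) - ln (N.+1%:R : R).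
  have gt_m1 : - 1 < - (N.+2%:R : R)^-1 by rewrite ltrN2 invf_lt1 // ltr1n.
  have := le_ln1Dx gt_m1.
  have -> : 1 + - (N.+2%:R : R)^-1 = N.+1%:R / N.+2%:R.
    have succ : (N.+2%:R : R) = N.+1%:R + 1 by rewrite -addn1 natrD.
    by rewrite succ; field; apply/eqP; have := ler0n R N; lra.
  rewrite ln_div ?posrE //.
  by move: (N.+2%:R^-1 : R) (ln (N.+2%:R : R)) (ln (N.+1%:R : R)) => a u v; lra.
have := IH isT; move: step.
move: (N.+2%:R^-1 : R) (ln (N.+2%:R : R)) (ln (N.+1%:R : R)).
by move: (\sum_(1 <= n < N.+2) (n%:R : R)^-1) => h a u v; lra.
Qed.

Lemma sum_le_const_add_ln (d : nat -> R) (B : R) N0 : 0 <= B ->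
  (forall n, (0 < n)%N -> d n <= B) ->
  (forall n, (0 < n)%N -> (N0 <= n)%N -> d n <= n%:R^-1) ->
  forall N, (0 < N)%N -> \sum_(1 <= n < N.+1) d n <= N0%:R * B + (1 + ln (N%:R : R)).
Proof.
move=> B0 d_le d_le_inv N N0p.
apply: le_trans (_ : \sum_(1 <= n < N.+1) (B * (n < N0)%N%:R + n%:R^-1) <= _).
  apply: ler_sum_nat => n /andP [n1 _].
  case: (ltnP n N0) => nN0 /=; last by rewrite mulr0 add0r d_le_inv.
  by rewrite mulr1 -[d n]addr0 lerD ?d_le // invr_ge0.
rewrite big_split /= -mulr_sumr lerD ?harmonic_le_ln // mulrC ler_wpM2r //.
rewrite -natr_sum ler_nat; apply: leq_trans (geq_minr N N0).
elim: N {N0p} => [|N IH]; first by rewrite big_geq.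
by rewrite big_nat_recr //=; case: (ltnP N.+1 N0) => /=; lia.
Qed.

Lemma limsup_div_ln_le1 (S : nat -> R) (A : R) : 0 <= A ->
  (forall N, (0 < N)%N -> S N <= A + ln (N%:R : R)) ->
  (limn_esup (fun N : nat => ((ln (N%:R : R))^-1 * S N)%:E) <= 1%:E)%E.
Proof.
move=> A0 S_le; apply/lee_addgt0Pr => e e0.
rewrite limn_esup_lim; apply: lime_le; first exact: is_cvg_esups.
have exp_lt := archi_boundP (expR_ge0 (A / e)).
set N1 := Num.bound (expR (A / e)) in exp_lt.
exists (maxn 2 N1) => // n /= n_ge; apply: ge_ereal_sup => _ [k /= nk <-].
have k2 : (1 < k)%N by lia.
have k0 : (0 < k)%N by lia.
have ln_pos : 0 < ln (k%:R : R) by apply: ln_gt0; rewrite ltr1n.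
have ln_ge : A <= e * ln (k%:R : R).
  rewrite mulrC -ler_pdivrMr // -[leLHS]expRK ler_ln ?posrE ?expR_gt0 ?ltr0n //.
  by apply: le_trans (ltW exp_lt) _; rewrite ler_nat; lia.
have := S_le k k0.
rewrite lee_fin ler_pdivrMl //; nra.
Qed.

End Asymptotics.

Theorem proposition6p13 (R : realType) (x : nat -> R) :
  monB x ->
  (limn_esup (fun N : nat =>
     ((ln (N%:R : R))^-1 * \sum_(1 <= n < N.+1) (decr_rearr x n) ^+ 2)%:E)
   <= 1%:E)%E.
Proof.
move=> x_monB.
have [K [K0 sum_le]] := monB_square_summable x_monB.
have [N0 small] := decr_rearr_sqr_le_inv sum_le.
have x_le := abs_le_sqrt_bound sum_le.
have bounded n : (0 < n)%N -> decr_rearr x n ^+ 2 <= K.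
  by move=> n0; apply: (decr_rearr_sqr_le x_le n0 K0 (J := [::])) => // k _;
     apply: sqr_le_bound.
apply: (@limsup_div_ln_le1 R _ (N0%:R * K + 1)); first by rewrite addr_ge0 ?mulr_ge0.
move=> N N_pos; rewrite -addrA.
exact: (sum_le_const_add_ln K0 bounded small).
Qed.
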